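(* Let $G$ be a finite abelian group of even order and $S=\{s^{\pm1},t^{\pm1},u^{\pm1}\}$ a symmetric generating set. Suppose the $18$ elements $s^it^ju^k$ ($0\le i\le2$, $0\le j\le2$, $0\le k\le1$) are distinct, and let $Y$ be the set of them. Suppose either $G=Y$, or there is a hamiltonian cycle of the subgraph of $\mathrm{Cay}(G;S)$ induced by $G\setminus Y$ that contains the edge from $t^3$ to $t^3s$. Then $\mathcal H$ contains every basic $4$-cycle.
   Context: $\mathrm{Cay}(G;S)$ has vertex set $G$ and edges $\{g,gs\}$. $[v](t_1,\dots,t_n)$ denotes the walk $v,vt_1,\dots,vt_1\cdots t_n$; closed walks are identified with flows ($+1$ on traversed oriented edges, $-1$ on reversals). A basic $4$-cycle is a closed walk $[v](a,b,a^{-1},b^{-1})$ with $v\in G$, $a,b\in S$. A flow is $f:G\times S\to\mathbb Z$ with $f(v,a)=-f(va,a^{-1})$ and $\sum_af(v,a)=0$. $\mathcal H$ is the subgroup of flows generated by oriented hamiltonian cycles. *)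

From mathcomp Require Import all_boot all_algebra all_fingroup.
Set Implicit Arguments. Unset Strict Implicit. Unset Printing Implicit Defensive.
Import GRing.Theory.

Local Open Scope group_scope.

Section Cayley.
Variable gT : finGroupType.

Definition gen3 (s t u : gT) : {set gT} := [set s; s^-1; t; t^-1; u; u^-1].

Definition Yset (s t u : gT) : {set gT} :=
  [set x | [exists i : 'I_3, exists j : 'I_3, exists k : 'I_2,
              x == s ^+ i * t ^+ j * u ^+ k]].

Definition walk_vert (v : gT) (ts : seq gT) (i : nat) : gT :=
  foldl (fun x y => x * y)%g v (take i ts).

(* Flow of the walk [v](ts): +1 on each traversed oriented edge (v_{i}, t_{i+1}),
   -1 on its reversal (v_{i+1}, t_{i+1}^-1).  A flow is a function G x S -> Z,
   here written as a curried function. *)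
Definition walk_flow (v : gT) (ts : seq gT) : gT -> gT -> int :=
  fun x a =>
    (\sum_(i < size ts)
       (((x == walk_vert v ts i) && (a == nth 1%g ts i))%:Z
        - ((x == walk_vert v ts i.+1) && (a == (nth 1%g ts i)^-1%g))%:Z))%R.

Definition ham_cycle_in (S A : {set gT}) (v : gT) (ts : seq gT) : bool :=
  [&& all (fun a => a \in S) ts,
      walk_vert v ts (size ts) == v,
      2 < size ts,
      uniq [seq walk_vert v ts i | i <- iota 0 (size ts)]
    & [set walk_vert v ts i | i : 'I_(size ts)] == A].

Definition walk_has_edge (v : gT) (ts : seq gT) (x y : gT) : bool :=
  [exists i : 'I_(size ts),
     ((walk_vert v ts i == x) && (walk_vert v ts i.+1 == y))
     || ((walk_vert v ts i == y) && (walk_vert v ts i.+1 == x))].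

(* f belongs to the subgroup H of flows (on G x S) generated by the oriented
   hamiltonian cycles of Cay(G;S): f is a Z-linear combination of them. *)
Definition in_ham_span (S : {set gT}) (f : gT -> gT -> int) : Prop :=
  exists l : seq (int * (gT * seq gT)),
    all (fun p => ham_cycle_in S [set: gT] p.2.1 p.2.2) l /\
    forall x a, a \in S ->
      f x a = (\sum_(p <- l) p.1 * walk_flow p.2.1 p.2.2 x a)%R.

End Cayley.

(* Since G is abelian, a walk with steps s^{+-1}, t^{+-1}, u^{+-1} from b is a walk in N^3,
   the cell (i, j, k) standing for b s^i t^j u^k, and its flow is a formal integer combination
   of oriented lattice edges; identities between such flows are checked by computation.
   If G = Y, each basic square in the s-t, s-u and t-u directions is an integer combination of
   hamiltonian cycles of the 3x3x2 grid Y.  Otherwise, replacing the edge t^3 -- t^3 s of the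
   given hamiltonian cycle of G \ Y by hamiltonian paths of Y + {t^3, t^3 s} gives hamiltonian
   cycles of G, and in a combination of them whose coefficients sum to 0 only a basic square
   survives.  Translates of basic squares then give every basic 4-cycle [v](a, b, a^-1, b^-1),
   which is either 0 or plus or minus a translate of a basic square. *)

From mathcomp Require Import all_boot all_algebra all_fingroup zify.
Set Implicit Arguments. Unset Strict Implicit. Unset Printing Implicit Defensive.
Import GRing.Theory.

(** * Walks and flows *)

Section Walks.
Variable gT : finGroupType.
Local Open Scope group_scope.
Implicit Types (v w x a : gT) (l m : seq gT).

Definition walk_end v l : gT := foldl (fun x y => x * y) v l.
Definition walk_verts v l : seq gT := [seq walk_vert v l i | i <- iota 0 (size l)].
Definition splice l i m : seq gT := take i l ++ m ++ drop i.+1 l.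

Lemma walk_vert0 v l : walk_vert v l 0 = v. Proof. by case: l. Qed.
Lemma walk_vertE v l i : walk_vert v l i = walk_end v (take i l). Proof. by []. Qed.
Lemma walk_vert_size v l : walk_vert v l (size l) = walk_end v l.
Proof. by rewrite walk_vertE take_size. Qed.
Lemma walk_end_cons v a l : walk_end v (a :: l) = walk_end (v * a) l. Proof. by []. Qed.
Lemma walk_end_cat v l m : walk_end v (l ++ m) = walk_end (walk_end v l) m.
Proof. exact: foldl_cat. Qed.

Lemma walk_verts_cons v a l : walk_verts v (a :: l) = v :: walk_verts (v * a) l.
Proof.
rewrite /walk_verts /= walk_vert0 -[1%N]addn0 iotaDl -map_comp.
by congr (_ :: _); apply: eq_map => i; rewrite /= add1n.
Qed.

Lemma walk_verts_cat v l m :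
  walk_verts v (l ++ m) = walk_verts v l ++ walk_verts (walk_end v l) m.
Proof. by elim: l v => [|a l IH] v //; rewrite cat_cons !walk_verts_cons IH. Qed.

Lemma walk_verts_split v l i : i < size l ->
  walk_verts v l =
  walk_verts v (take i l) ++ walk_vert v l i :: walk_verts (walk_vert v l i.+1) (drop i.+1 l).
Proof.
move=> lt_i_l; rewrite -{1}(cat_take_drop i.+1 l) walk_verts_cat -walk_vertE.
by rewrite (take_nth 1 lt_i_l) -cats1 walk_verts_cat -walk_vertE walk_verts_cons -catA.
Qed.

Lemma walk_verts_splice v l i m :
  walk_verts v (splice l i m) =
  walk_verts v (take i l) ++ walk_verts (walk_vert v l i) m ++
  walk_verts (walk_end (walk_vert v l i) m) (drop i.+1 l).
Proof. by rewrite /splice !walk_verts_cat -walk_vertE. Qed.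

Lemma walk_end_splice v l i m : i < size l ->
  walk_end (walk_vert v l i) m = walk_vert v l i.+1 ->
  walk_end v (splice l i m) = walk_end v l.
Proof.
move=> lt_i_l end_m; rewrite /splice !walk_end_cat -walk_vertE end_m walk_vertE -walk_end_cat.
by rewrite cat_take_drop.
Qed.

Lemma mem_walk_verts v l x :
  (x \in [set walk_vert v l i | i : 'I_(size l)]) = (x \in walk_verts v l).
Proof.
apply/imsetP/mapP => [[i _ ->]|[i]]; first by exists (val i); rewrite ?mem_iota ?add0n ?ltn_ord.
by rewrite mem_iota add0n => lt_i_l ->; exists (Ordinal lt_i_l).
Qed.

Lemma ham_cycle_inP (S A : {set gT}) v l :
  reflect [/\ all [in S] l, walk_end v l = v, 2 < size l, uniq (walk_verts v l)
            & walk_verts v l =i A]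
          (ham_cycle_in S A v l).
Proof.
apply: (iffP and5P) => [[inS /eqP closed sz uq /eqP vertsA]|[inS closed sz uq vertsA]].
  split=> // [|x]; first by rewrite -walk_vert_size.
  by rewrite -vertsA mem_walk_verts.
split=> //; first by rewrite walk_vert_size closed.
by apply/eqP/setP => x; rewrite mem_walk_verts vertsA.
Qed.

Lemma walk_flow_nil v x a : walk_flow v [::] x a = 0%R.
Proof. exact: big_ord0. Qed.

Lemma walk_flow_cons v b l x a :
  walk_flow v (b :: l) x a =
  (((x == v) && (a == b))%:Z - ((x == (v * b)%g) && (a == b^-1%g))%:Z
   + walk_flow (v * b)%g l x a)%R.
Proof.
rewrite /walk_flow big_ord_recl; congr (_ + _)%R.
by rewrite walk_vert0 /walk_vert /= take0.
Qed.

Lemma walk_flow_cat v l m x a :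
  walk_flow v (l ++ m) x a = (walk_flow v l x a + walk_flow (walk_end v l) m x a)%R.
Proof.
elim: l v => [|b l IH] v /=; first by rewrite walk_flow_nil add0r.
by rewrite !walk_flow_cons IH addrA.
Qed.

Lemma walk_flow_splice v l i m x a :
  walk_flow v (splice l i m) x a =
  (walk_flow v (take i l) x a + walk_flow (walk_vert v l i) m x a +
   walk_flow (walk_end (walk_vert v l i) m) (drop i.+1 l) x a)%R.
Proof. by rewrite /splice !walk_flow_cat -walk_vertE addrA. Qed.

Lemma walk_vert_lmul w v l i : walk_vert (w * v) l i = w * walk_vert v l i.
Proof. by rewrite /walk_vert; elim: (take i l) v => [|b l' IH] v //=; rewrite -mulgA IH. Qed.

Lemma walk_flow_lmul w v l x a : walk_flow (w * v) l x a = walk_flow v l (w^-1 * x) a.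
Proof.
have eq_lmul z : (x == w * z) = (w^-1 * x == z).
  by apply/eqP/eqP => [->|<-]; rewrite ?mulKg ?mulKVg.
by apply: eq_bigr => i _; rewrite !walk_vert_lmul !eq_lmul.
Qed.

Lemma ham_cycle_in_splice (S A B : {set gT}) v l i m :
  ham_cycle_in S A v l -> i < size l -> 0 < size m -> all [in S] m ->
  walk_end (walk_vert v l i) m = walk_vert v l i.+1 ->
  uniq (behead (walk_verts (walk_vert v l i) m)) ->
  behead (walk_verts (walk_vert v l i) m) =i B -> [disjoint A & B] ->
  ham_cycle_in S (A :|: B) v (splice l i m).
Proof.
case/ham_cycle_inP => lS closed sz uq vertsA lt_i_l m_gt0 mS end_m uqB vertsB dAB.
have vertsm : walk_verts (walk_vert v l i) m =
              walk_vert v l i :: behead (walk_verts (walk_vert v l i) m).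
  by case: m m_gt0 {mS end_m uqB vertsB} => // b m _; rewrite walk_verts_cons.
have perm_verts : perm_eq (walk_verts v (splice l i m))
                          (walk_verts v l ++ behead (walk_verts (walk_vert v l i) m)).
  rewrite walk_verts_splice vertsm end_m (walk_verts_split v lt_i_l) -!catA perm_cat2l /=.
  by rewrite perm_cons perm_catC.
apply/ham_cycle_inP; split.
- rewrite /splice !all_cat mS; apply/and3P; split=> //; apply/allP => a.
    by move/mem_take/(allP lS).
  by move/mem_drop/(allP lS).
- by rewrite walk_end_splice.
- rewrite /splice !size_cat size_takel ?size_drop; last exact: ltnW.
  lia.
- rewrite (perm_uniq perm_verts) cat_uniq uq uqB andbT.
  by apply/hasPn => x /[!vertsB] xB; rewrite vertsA (disjointFl dAB xB).
- by move=> x; rewrite (perm_mem perm_verts) mem_cat vertsA vertsB inE.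
Qed.

End Walks.

Section HamSpan.
Variables (gT : finGroupType) (S : {set gT}).
Local Open Scope group_scope.

Lemma ham_cycle_in_lmul w v l :
  ham_cycle_in S [set: gT] v l -> ham_cycle_in S [set: gT] (w * v) l.
Proof.
case/ham_cycle_inP => inS closed sz uq vertsT; apply/ham_cycle_inP; split=> //.
- by rewrite -walk_vert_size walk_vert_lmul walk_vert_size closed.
- have -> : walk_verts (w * v) l = [seq w * y | y <- walk_verts v l].
    by rewrite -map_comp; apply: eq_map => i; rewrite /= walk_vert_lmul.
  by rewrite map_inj_uniq //; apply: mulgI.
- move=> x; have : w^-1 * x \in walk_verts v l by rewrite vertsT inE.
  case/mapP => i iP vi; rewrite inE; apply/mapP; exists i => //.
  by rewrite walk_vert_lmul -vi mulKVg.
Qed.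

Lemma in_ham_span_eq f f' :
  (forall x a, a \in S -> f x a = f' x a) -> in_ham_span S f -> in_ham_span S f'.
Proof. by move=> eq_f [l [ham fE]]; exists l; split=> // x a Sa; rewrite -eq_f // fE. Qed.

Lemma in_ham_span0 : in_ham_span S (fun _ _ => 0%R).
Proof. by exists [::]; split=> // x a _; rewrite big_nil. Qed.

Lemma in_ham_spanZ (e : int) f :
  in_ham_span S f -> in_ham_span S (fun x a => e * f x a)%R.
Proof.
move=> [l [ham fE]]; exists [seq (e * p.1, p.2)%R | p <- l]; split.
  by rewrite all_map; apply: sub_all ham => p.
move=> x a Sa; rewrite fE // big_map mulr_sumr.
by apply: eq_bigr => p _; rewrite mulrA.
Qed.

Lemma in_ham_span_lmul w f :
  in_ham_span S f -> in_ham_span S (fun x a => f (w^-1 * x) a).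
Proof.
move=> [l [ham fE]]; exists [seq (p.1, (w * p.2.1, p.2.2)) | p <- l]; split.
  by rewrite all_map; apply: sub_all ham => p /= /ham_cycle_in_lmul.
by move=> x a Sa; rewrite fE // big_map; apply: eq_bigr => p _; rewrite walk_flow_lmul.
Qed.

Lemma in_ham_span_walk_lmul v0 v l :
  in_ham_span S (walk_flow v0 l) -> in_ham_span S (walk_flow v l).
Proof.
move/(in_ham_span_lmul (v * v0^-1)); apply: in_ham_span_eq => x a _.
by rewrite -walk_flow_lmul mulgKV.
Qed.

End HamSpan.

(** * Cells, directions and chains *)

(* Directions 0, ..., 5 stand for s, s^-1, t, t^-1, u, u^-1 (see [dir_elt]); a [chain] is a
   formal integer combination of oriented edges (cell, direction). *)
Definition cell := (nat * nat * nat)%type.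

Definition dir_inv (d : nat) : nat :=
  match d with 0 => 1 | 1 => 0 | 2 => 3 | 3 => 2 | 4 => 5 | _ => 4 end.

Definition cell_move (c : cell) (d : nat) : cell :=
  let: (i, j, k) := c in
  match d with
  | 0 => (i.+1, j, k) | 1 => (i.-1, j, k) | 2 => (i, j.+1, k)
  | 3 => (i, j.-1, k) | 4 => (i, j, k.+1) | _ => (i, j, k.-1)
  end.

Definition move_ok (c : cell) (d : nat) : bool :=
  let: (i, j, k) := c in
  match d with 0 | 2 | 4 => true | 1 => 0 < i | 3 => 0 < j | _ => 0 < k end.

Fixpoint cell_walk_ok (c : cell) (ds : seq nat) : bool :=
  if ds is d :: ds' then move_ok c d && cell_walk_ok (cell_move c d) ds' else true.

Fixpoint cell_verts (c : cell) (ds : seq nat) : seq cell :=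
  if ds is d :: ds' then c :: cell_verts (cell_move c d) ds' else [::].

Fixpoint cell_end (c : cell) (ds : seq nat) : cell :=
  if ds is d :: ds' then cell_end (cell_move c d) ds' else c.

Definition chain := seq (int * (cell * nat)).

Fixpoint walk_chain (c : cell) (ds : seq nat) : chain :=
  if ds is d :: ds' then
    (1%R, (c, d)) :: ((-1)%R, (cell_move c d, dir_inv d)) :: walk_chain (cell_move c d) ds'
  else [::].

Definition chain_coef (L : chain) (k : cell * nat) : int :=
  foldr (fun e acc => if e.2 == k then (e.1 + acc)%R else acc) 0%R L.

Definition chain_eqb (L L' : chain) : bool :=
  all (fun k => chain_coef L k == chain_coef L' k) (map snd L ++ map snd L').

Definition chain_scale (e : int) (L : chain) : chain := [seq ((e * p.1)%R, p.2) | p <- L].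

Definition walk_combo (c : cell) (fam : seq (int * seq nat)) : chain :=
  flatten [seq chain_scale p.1 (walk_chain c p.2) | p <- fam].

Section ChainFlow.
Variables (gT : finGroupType) (s t u : gT).
Local Open Scope group_scope.

Definition dir_elt (d : nat) : gT :=
  match d with 0 => s | 1 => s^-1 | 2 => t | 3 => t^-1 | 4 => u | _ => u^-1 end.

Definition cell_elt (b : gT) (c : cell) : gT :=
  let: (i, j, k) := c in b * s ^+ i * t ^+ j * u ^+ k.

Definition edge_ind (b x a : gT) (k : cell * nat) : int :=
  ((x == cell_elt b k.1) && (a == dir_elt k.2))%:Z.

Definition chain_flow (b : gT) (L : chain) (x a : gT) : int :=
  (\sum_(e <- L) e.1 * edge_ind b x a e.2)%R.

Lemma dir_elt_inv d : (dir_elt d)^-1 = dir_elt (dir_inv d).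
Proof. by case: d => [|[|[|[|[|d]]]]] /=; rewrite ?invgK. Qed.

Lemma chain_flow_coef b L K x a : uniq K -> {subset map snd L <= K} ->
  chain_flow b L x a = (\sum_(k <- K) chain_coef L k * edge_ind b x a k)%R.
Proof.
move=> uK; elim: L => [|e L IH] /= LK.
  by rewrite /chain_flow big_nil big1 // => k _; rewrite mul0r.
rewrite /chain_flow big_cons -/(chain_flow b L x a) IH => [|k Lk]; last first.
  by apply: LK; rewrite inE Lk orbT.
have eK : e.2 \in K by apply: LK; rewrite inE eqxx.
rewrite [in RHS](bigD1_seq e.2) //= eqxx (bigD1_seq e.2) //= mulrDl -addrA.
congr (_ + (_ + _))%R; apply: eq_bigr => k ke.
by rewrite eq_sym (negbTE ke).
Qed.

Lemma chain_flow_eqb b L L' : chain_eqb L L' -> chain_flow b L =2 chain_flow b L'.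
Proof.
move/allP => coefE x a; set K := undup (map snd L ++ map snd L').
have uK : uniq K := undup_uniq _.
have LK : {subset map snd L <= K} by move=> k Lk; rewrite mem_undup mem_cat Lk.
have L'K : {subset map snd L' <= K} by move=> k L'k; rewrite mem_undup mem_cat L'k orbT.
rewrite (chain_flow_coef _ _ _ uK LK) (chain_flow_coef _ _ _ uK L'K).
by apply: eq_big_seq => k; rewrite mem_undup => /coefE/eqP ->.
Qed.

Lemma chain_flow_cat b L L' x a :
  chain_flow b (L ++ L') x a = (chain_flow b L x a + chain_flow b L' x a)%R.
Proof. exact: big_cat. Qed.

Lemma chain_flow_scale b e L x a :
  chain_flow b (chain_scale e L) x a = (e * chain_flow b L x a)%R.
Proof.
by rewrite /chain_flow big_map mulr_sumr; apply: eq_bigr => p _; rewrite mulrA.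
Qed.

Lemma chain_flow_combo b c fam x a :
  chain_flow b (walk_combo c fam) x a =
  (\sum_(p <- fam) p.1 * chain_flow b (walk_chain c p.2) x a)%R.
Proof.
elim: fam => [|p fam IH]; first by rewrite big_nil /chain_flow big_nil.
by rewrite /walk_combo /= chain_flow_cat -/(walk_combo c fam) IH big_cons chain_flow_scale.
Qed.

Hypotheses (cst : commute s t) (csu : commute s u) (ctu : commute t u).

Lemma cell_elt_move b c d :
  move_ok c d -> cell_elt b c * dir_elt d = cell_elt b (cell_move c d).
Proof.
have cs j k : commute (t ^+ j * u ^+ k) s by apply/commute_sym/commuteM; apply: commuteX.
have ct k : commute (u ^+ k) t by apply/commute_sym/commuteX.
have mul_s i j k : b * s ^+ i * t ^+ j * u ^+ k * s = b * s ^+ i.+1 * t ^+ j * u ^+ k.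
  by rewrite -!mulgA [t ^+ j * _]mulgA cs [in RHS]expgSr !mulgA.
have mul_t i j k : b * s ^+ i * t ^+ j * u ^+ k * t = b * s ^+ i * t ^+ j.+1 * u ^+ k.
  by rewrite -mulgA ct mulgA [in RHS]expgSr mulgA.
have mul_u i j k : b * s ^+ i * t ^+ j * u ^+ k * u = b * s ^+ i * t ^+ j * u ^+ k.+1.
  by rewrite expgSr mulgA.
case: c => [[i j] k]; case: d => [|[|[|[|[|d]]]]] /=.
- by rewrite mul_s.
- by case: i => // i _; apply: (canLR (mulgK s)); rewrite mul_s.
- by rewrite mul_t.
- by case: j => // j _; apply: (canLR (mulgK t)); rewrite mul_t.
- by rewrite mul_u.
- by case: k => // k _; apply: (canLR (mulgK u)); rewrite mul_u.
Qed.

Lemma walk_flow_chain b c ds x a : cell_walk_ok c ds ->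
  walk_flow (cell_elt b c) (map dir_elt ds) x a = chain_flow b (walk_chain c ds) x a.
Proof.
elim: ds c => [|d ds IH] c /=; first by rewrite walk_flow_nil /chain_flow big_nil.
case/andP => ok_d ok_ds; rewrite walk_flow_cons cell_elt_move // IH //.
by rewrite /chain_flow !big_cons /= dir_elt_inv mul1r mulN1r addrA.
Qed.

Lemma walk_verts_cell b c ds : cell_walk_ok c ds ->
  walk_verts (cell_elt b c) (map dir_elt ds) = map (cell_elt b) (cell_verts c ds).
Proof.
elim: ds c => [|d ds IH] c //= /andP [ok_d ok_ds].
by rewrite walk_verts_cons cell_elt_move // IH.
Qed.

Lemma walk_end_cell b c ds : cell_walk_ok c ds ->
  walk_end (cell_elt b c) (map dir_elt ds) = cell_elt b (cell_end c ds).
Proof.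
elim: ds c => [|d ds IH] c // /andP [ok_d ok_ds].
by rewrite map_cons walk_end_cons cell_elt_move // IH.
Qed.

End ChainFlow.

Definition in_grid (c : cell) : bool := let: (i, j, k) := c in [&& i < 3, j < 3 & k < 2].

Definition grid : seq cell :=
  [seq (p, k) | p <- [seq (i, j) | i <- iota 0 3, j <- iota 0 3], k <- iota 0 2].

Definition grid_ham_cycle (c : cell) (ds : seq nat) : bool :=
  [&& cell_walk_ok c ds, cell_end c ds == c, 2 < size ds,
      all in_grid (cell_verts c ds), uniq (cell_verts c ds)
    & all [in cell_verts c ds] grid].

Definition grid_ham_path (cp cq : cell) (ds : seq nat) : bool :=
  [&& cell_walk_ok cp ds, cell_end cp ds == cq, 0 < size ds,
      all in_grid (behead (cell_verts cp ds)), uniq (behead (cell_verts cp ds))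
    & all [in behead (cell_verts cp ds)] grid].

Definition basic_square (n : nat) : seq nat :=
  match n with 0 => [:: 0; 2; 1; 3] | 1 => [:: 0; 4; 1; 5] | _ => [:: 2; 4; 3; 5] end.

Definition sum_coefs (fam : seq (int * seq nat)) : int := foldr (fun p acc => (p.1 + acc)%R) 0%R fam.

Definition cycles_span_square (c : cell) (fam : seq (int * seq nat)) (csq : cell) (n : nat) :=
  all (grid_ham_cycle c) (map snd fam) &&
  chain_eqb (walk_combo c fam) (walk_chain csq (basic_square n)).

Definition paths_span_square (cp cq : cell) (fam : seq (int * seq nat)) (csq : cell) (n : nat) :=
  [&& all (grid_ham_path cp cq) (map snd fam), sum_coefs fam == 0%R
    & chain_eqb (walk_combo cp fam) (walk_chain csq (basic_square n))].

Lemma mem_grid c : in_grid c -> c \in grid.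
Proof.
case: c => [[i j] k] /and3P [].
by case: i => [|[|[|]]] // _; case: j => [|[|[|]]] // _; case: k => [|[|]].
Qed.

Lemma cell_walk_ok_square c n : cell_walk_ok c (basic_square n).
Proof. by case: c => [[i j] k]; case: n => [|[|n]]. Qed.

Lemma sum_coefsE fam : sum_coefs fam = (\sum_(p <- fam) p.1)%R.
Proof. by elim: fam => [|p fam IH]; rewrite ?big_nil ?big_cons //= IH. Qed.

(** * Certificates *)

(* Integer combinations of grid walks found by computer search: for each basic square, of
   hamiltonian cycles of the grid, and of hamiltonian paths through the grid from t^3 to t^3 s
   and from t^3 s to t^3. *)
Definition grid_cycles (n : nat) : seq (int * seq nat) :=
  match n with
  | 0 =>
    [:: (1%Z, [:: 0; 0; 2; 2; 1; 1; 3; 0; 4; 1; 2; 0; 0; 3; 3; 1; 1; 5]);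
        ((-1)%Z, [:: 2; 0; 4; 1; 2; 5; 0; 4; 0; 5; 3; 4; 3; 5; 1; 4; 1; 5]);
        (1%Z, [:: 2; 2; 0; 0; 3; 3; 1; 2; 4; 3; 0; 2; 2; 1; 1; 3; 3; 5]);
        ((-1)%Z, [:: 2; 0; 4; 3; 5; 0; 4; 2; 5; 2; 4; 1; 5; 1; 4; 3; 3; 5])]
  | 1 =>
    [:: (1%Z, [:: 0; 0; 4; 1; 2; 0; 5; 1; 1; 2; 0; 0; 4; 1; 1; 3; 3; 5]);
        ((-1)%Z, [:: 0; 2; 1; 4; 2; 5; 0; 4; 3; 0; 2; 5; 3; 3; 4; 1; 1; 5]);
        (1%Z, [:: 0; 4; 1; 2; 2; 0; 3; 5; 0; 3; 4; 2; 2; 5; 1; 1; 3; 3]);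
        ((-1)%Z, [:: 4; 0; 2; 5; 3; 0; 4; 2; 5; 2; 4; 1; 5; 1; 4; 3; 5; 3])]
  | _ =>
    [:: (1%Z, [:: 0; 0; 2; 2; 4; 3; 3; 1; 2; 2; 5; 3; 1; 2; 4; 3; 3; 5]);
        ((-1)%Z, [:: 0; 0; 2; 1; 4; 2; 1; 5; 0; 0; 4; 3; 3; 1; 1; 2; 5; 3]);
        (1%Z, [:: 2; 0; 4; 1; 2; 5; 0; 4; 0; 5; 3; 4; 3; 5; 1; 4; 1; 5]);
        ((-1)%Z, [:: 2; 2; 4; 0; 0; 5; 1; 3; 0; 4; 3; 5; 1; 4; 2; 1; 3; 5])]
  end.

Definition splice_paths_fwd (n : nat) : seq (int * seq nat) :=
  match n with
  | 0 =>
    [:: (1%Z, [:: 3; 3; 0; 4; 1; 2; 0; 0; 3; 3; 1; 1; 5; 0; 0; 2; 2; 1; 2]);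
        ((-1)%Z, [:: 3; 3; 3; 4; 2; 2; 0; 0; 3; 3; 1; 2; 5; 3; 0; 2; 2; 1; 2]);
        (1%Z, [:: 3; 4; 3; 0; 5; 1; 3; 4; 0; 5; 0; 4; 2; 5; 2; 4; 1; 5; 2]);
        ((-1)%Z, [:: 3; 4; 3; 3; 5; 2; 0; 4; 3; 5; 0; 4; 2; 5; 2; 4; 1; 5; 2])]
  | 1 =>
    [:: (1%Z, [:: 3; 3; 3; 0; 4; 1; 2; 2; 0; 3; 5; 0; 3; 4; 2; 2; 5; 1; 2]);
        ((-1)%Z, [:: 3; 3; 0; 0; 4; 1; 3; 0; 5; 1; 1; 4; 2; 2; 0; 0; 5; 1; 2]);
        (1%Z, [:: 3; 4; 3; 5; 0; 3; 1; 4; 0; 0; 5; 2; 2; 4; 3; 1; 2; 5; 2]);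
        ((-1)%Z, [:: 3; 4; 3; 5; 3; 4; 0; 2; 5; 3; 0; 4; 2; 5; 2; 4; 1; 5; 2])]
  | _ =>
    [:: (1%Z, [:: 3; 3; 3; 4; 0; 5; 0; 4; 2; 1; 1; 2; 0; 0; 5; 3; 1; 2; 2]);
        ((-1)%Z, [:: 3; 3; 3; 4; 0; 2; 1; 2; 0; 0; 5; 3; 4; 3; 5; 1; 2; 2; 2]);
        (1%Z, [:: 3; 4; 3; 5; 3; 4; 0; 2; 0; 3; 5; 1; 2; 0; 2; 4; 1; 5; 2]);
        ((-1)%Z, [:: 3; 4; 3; 5; 3; 4; 0; 2; 5; 3; 0; 4; 2; 5; 2; 4; 1; 5; 2])]
  end.

Definition splice_paths_bwd (n : nat) : seq (int * seq nat) :=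
  match n with
  | 0 =>
    [:: (1%Z, [:: 3; 0; 3; 3; 1; 2; 4; 1; 2; 0; 0; 3; 3; 1; 1; 5; 2; 2; 2]);
        ((-1)%Z, [:: 3; 0; 3; 3; 1; 1; 4; 2; 2; 0; 0; 3; 3; 1; 2; 5; 1; 2; 2]);
        (1%Z, [:: 3; 4; 0; 5; 3; 4; 3; 5; 1; 4; 2; 5; 1; 3; 4; 2; 2; 5; 2]);
        ((-1)%Z, [:: 3; 4; 0; 5; 3; 4; 3; 5; 1; 4; 1; 5; 2; 0; 4; 1; 2; 5; 2])]
  | 1 =>
    [:: (1%Z, [:: 3; 0; 4; 1; 1; 3; 3; 5; 0; 0; 4; 1; 2; 0; 5; 1; 1; 2; 2]);
        ((-1)%Z, [:: 3; 0; 4; 3; 3; 5; 2; 1; 4; 2; 1; 3; 3; 0; 5; 1; 2; 2; 2]);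
        (1%Z, [:: 3; 4; 0; 5; 3; 4; 3; 5; 1; 2; 4; 3; 1; 5; 2; 4; 2; 5; 2]);
        ((-1)%Z, [:: 3; 4; 3; 0; 2; 5; 3; 3; 4; 1; 1; 5; 0; 2; 1; 4; 2; 5; 2])]
  | _ =>
    [:: (1%Z, [:: 3; 0; 3; 1; 1; 3; 4; 0; 5; 0; 4; 2; 2; 1; 3; 1; 2; 5; 2]);
        ((-1)%Z, [:: 3; 0; 3; 1; 3; 0; 4; 2; 2; 1; 3; 3; 1; 5; 2; 4; 2; 5; 2]);
        (1%Z, [:: 3; 4; 0; 5; 3; 4; 3; 5; 1; 2; 4; 3; 1; 5; 2; 4; 2; 5; 2]);
        ((-1)%Z, [:: 3; 4; 0; 5; 3; 4; 3; 5; 1; 2; 1; 3; 4; 0; 2; 1; 2; 5; 2])]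
  end.

Definition splice_square_base (n : nat) : cell := if n < 2 then (0, 0, 0) else (1, 0, 0).

Lemma grid_cycles_span n : cycles_span_square (0, 0, 0) (grid_cycles n) (0, 0, 0) n.
Proof. by case: n => [|[|n]]; vm_compute. Qed.

Lemma splice_paths_fwd_span n :
  paths_span_square (0, 3, 0) (1, 3, 0) (splice_paths_fwd n) (splice_square_base n) n.
Proof. by case: n => [|[|n]]; vm_compute. Qed.

Lemma splice_paths_bwd_span n :
  paths_span_square (1, 3, 0) (0, 3, 0) (splice_paths_bwd n) (splice_square_base n) n.
Proof. by case: n => [|[|n]]; vm_compute. Qed.

Definition commutator_dirs (d1 d2 : nat) : seq nat := [:: d1; d2; dir_inv d1; dir_inv d2].

Definition square_candidates : seq (int * (cell * nat)) :=
  let cube := [seq (p, k) | p <- [seq (i, j) | i <- iota 0 4, j <- iota 0 4], k <- iota 0 4] in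
  [seq (e, cn) | e <- [:: 1%Z; (-1)%Z], cn <- [seq (c, n) | c <- cube, n <- iota 0 3]].

(* Started at (2, 2, 2), a commutator walk stays in N^3 and its reduct is a square based in
   the cube [0, 3]^3. *)
Definition reduces_to_basic (ds : seq nat) : bool :=
  chain_eqb (walk_chain (2, 2, 2) ds) [::] ||
  has (fun w => chain_eqb (walk_chain (2, 2, 2) ds)
                          (chain_scale w.1 (walk_chain w.2.1 (basic_square w.2.2))))
      square_candidates.

Lemma commutator_dirs_reduce d1 d2 : d1 < 6 -> d2 < 6 ->
  cell_walk_ok (2, 2, 2) (commutator_dirs d1 d2) && reduces_to_basic (commutator_dirs d1 d2).
Proof.
by case: d1 => [|[|[|[|[|[|d1]]]]]] // _; case: d2 => [|[|[|[|[|[|d2]]]]]] // _; vm_compute.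
Qed.

(** * Basic squares in the Cayley graph *)

Section Gen3.
Variables (gT : finGroupType) (s t u : gT).
Local Open Scope group_scope.
Local Notation S := (gen3 s t u).
Local Notation E := (dir_elt s t u).

Lemma dir_elt_gen3 d : E d \in S.
Proof. by rewrite /gen3; case: d => [|[|[|[|[|d]]]]]; rewrite !inE eqxx ?orbT. Qed.

Lemma all_dir_elt_gen3 ds : all [in S] (map E ds).
Proof. by apply/allP => a /mapP [d _ ->]; apply: dir_elt_gen3. Qed.

Lemma gen3_dir a : a \in S -> exists2 d, d < 6 & a = E d.
Proof.
rewrite !inE -!orbA => /orP [/eqP->|/orP [/eqP->|/orP [/eqP->|/orP [/eqP->|/orP [/eqP->|/eqP->]]]]];
  [by exists 0%N | by exists 1%N | by exists 2%N | by exists 3%N | by exists 4%N | by exists 5%N].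
Qed.

End Gen3.

Section GridInGroup.
Variables (gT : finGroupType) (s t u : gT).
Hypotheses (cst : commute s t) (csu : commute s u) (ctu : commute t u).
Hypothesis Yset_distinct : forall (i i' j j' : 'I_3) (k k' : 'I_2),
  (s ^+ i * t ^+ j * u ^+ k = s ^+ i' * t ^+ j' * u ^+ k')%g -> [/\ i = i', j = j' & k = k'].
Local Open Scope group_scope.
Local Notation S := (gen3 s t u).
Local Notation Y := (Yset s t u).
Local Notation G := (cell_elt s t u 1).
Local Notation E := (dir_elt s t u).

Lemma cell_elt_grid_inj c c' : in_grid c -> in_grid c' -> G c = G c' -> c = c'.
Proof.
case: c c' => [[i j] k] [[i' j'] k'] /and3P [lti ltj ltk] /and3P [lti' ltj' ltk'].
rewrite /cell_elt !mul1g => /(@Yset_distinct (Ordinal lti) (Ordinal lti') (Ordinal ltj)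
                                            (Ordinal ltj') (Ordinal ltk) (Ordinal ltk')).
by case=> [[->] [->] [->]].
Qed.

Lemma mem_Yset_grid cs : all in_grid cs -> all [in cs] grid -> map G cs =i Y.
Proof.
move=> /allP cs_grid /allP grid_cs x; apply/mapP/idP => [[c /cs_grid c_grid ->]|].
  case: c c_grid => [[i j] k] /and3P [lti ltj ltk]; rewrite inE.
  apply/existsP; exists (Ordinal lti); apply/existsP; exists (Ordinal ltj).
  by apply/existsP; exists (Ordinal ltk); rewrite /cell_elt mul1g.
rewrite inE => /existsP [i /existsP [j /existsP [k /eqP ->]]].
exists (val i, val j, val k); last by rewrite /cell_elt mul1g.
by apply: grid_cs; apply: mem_grid; rewrite /= !ltn_ord.
Qed.

Lemma uniq_grid_elts cs : all in_grid cs -> uniq cs -> uniq (map G cs).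
Proof.
move=> /allP cs_grid; rewrite map_inj_in_uniq // => c c' /cs_grid ? /cs_grid ?.
exact: cell_elt_grid_inj.
Qed.

Lemma grid_ham_cycle_in (Y_full : Y = [set: gT]) c ds :
  grid_ham_cycle c ds -> ham_cycle_in S [set: gT] (G c) (map E ds).
Proof.
case/and3P => ok /eqP c_end /and4P [sz ds_grid uq cover].
apply/ham_cycle_inP; split; rewrite ?size_map ?walk_verts_cell //.
- exact: all_dir_elt_gen3.
- by rewrite walk_end_cell // c_end.
- exact: uniq_grid_elts.
- by move=> x; rewrite mem_Yset_grid // Y_full.
Qed.

Lemma basic_square_span_cycles (Y_full : Y = [set: gT]) c fam csq n :
  cycles_span_square c fam csq n -> in_ham_span S (walk_flow (G csq) (map E (basic_square n))).
Proof.
case/andP => /allP cycles combo_sq.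
have fam_cycles p : p \in fam -> grid_ham_cycle c p.2 by move=> fp; apply/cycles/map_f.
apply: (@in_ham_span_eq _ _ (chain_flow s t u 1 (walk_combo c fam))) => [x a _|].
  by rewrite (chain_flow_eqb s t u 1 combo_sq) walk_flow_chain // cell_walk_ok_square.
exists [seq (p.1, (G c, map E p.2)) | p <- fam]; split.
  by rewrite all_map; apply/allP => p /fam_cycles /(grid_ham_cycle_in Y_full).
move=> x a _; rewrite chain_flow_combo big_map; apply: eq_big_seq => p /fam_cycles.
by case/and3P => ok _ _; rewrite walk_flow_chain.
Qed.

Lemma ham_cycle_in_splice_grid v ts i cp cq ds :
  ham_cycle_in S (~: Y) v ts -> i < size ts ->
  walk_vert v ts i = G cp -> walk_vert v ts i.+1 = G cq -> grid_ham_path cp cq ds ->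
  ham_cycle_in S [set: gT] v (splice ts i (map E ds)).
Proof.
move=> ham lt_i_ts ts_i ts_i1 /and3P [ok /eqP cp_end /and4P [sz ds_grid uq cover]].
rewrite -(setUCr Y) setUC; apply: ham_cycle_in_splice; rewrite ?size_map //.
- exact: all_dir_elt_gen3.
- by rewrite ts_i walk_end_cell // cp_end.
- by rewrite ts_i walk_verts_cell // behead_map uniq_grid_elts.
- by move=> x; rewrite ts_i walk_verts_cell // behead_map mem_Yset_grid.
- by rewrite disjoints_subset.
Qed.

Lemma basic_square_span_paths v ts i cp cq fam csq n :
  ham_cycle_in S (~: Y) v ts -> i < size ts ->
  walk_vert v ts i = G cp -> walk_vert v ts i.+1 = G cq -> paths_span_square cp cq fam csq n ->
  in_ham_span S (walk_flow (G csq) (map E (basic_square n))).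
Proof.
move=> ham lt_i_ts ts_i ts_i1 /and3P [/allP paths /eqP sum0 combo_sq].
have fam_paths p : p \in fam -> grid_ham_path cp cq p.2 by move=> fp; apply/paths/map_f.
apply: (@in_ham_span_eq _ _ (chain_flow s t u 1 (walk_combo cp fam))) => [x a _|].
  by rewrite (chain_flow_eqb s t u 1 combo_sq) walk_flow_chain // cell_walk_ok_square.
exists [seq (p.1, (v, splice ts i (map E p.2))) | p <- fam]; split.
  rewrite all_map; apply/allP => p /fam_paths /=.
  exact: ham_cycle_in_splice_grid ham lt_i_ts ts_i ts_i1.
(* The spliced cycles agree outside the paths, and their coefficients sum to 0. *)
move=> x a _; rewrite chain_flow_combo big_map.
under [RHS]eq_big_seq => p /fam_paths /and3P [ok /eqP cp_end _].
  rewrite walk_flow_splice ts_i walk_end_cell // cp_end walk_flow_chain // addrAC mulrDr.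
over.
by rewrite big_split /= -mulr_suml -sum_coefsE sum0 mul0r add0r.
Qed.

Lemma basic_square_span_grid (Y_full : Y = [set: gT]) n w :
  in_ham_span S (walk_flow w (map E (basic_square n))).
Proof. exact/in_ham_span_walk_lmul/(basic_square_span_cycles Y_full (grid_cycles_span n)). Qed.

Lemma basic_square_span_spliced v ts n w :
  ham_cycle_in S (~: Y) v ts -> walk_has_edge v ts (t ^+ 3) (t ^+ 3 * s) ->
  in_ham_span S (walk_flow w (map E (basic_square n))).
Proof.
have G03 : G (0, 3, 0) = t ^+ 3 by rewrite /cell_elt expg0 !mulg1 mul1g.
have G13 : G (1%N, 3, 0) = t ^+ 3 * s.
  by rewrite /cell_elt expg1 expg0 mulg1 mul1g (commuteX 3 cst).
move=> ham /existsP [i /orP [] /andP [/eqP ts_i /eqP ts_i1]]; apply: in_ham_span_walk_lmul.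
- apply: (basic_square_span_paths ham (ltn_ord i) _ _ (splice_paths_fwd_span n)).
  + by rewrite ts_i G03.
  + by rewrite ts_i1 G13.
- apply: (basic_square_span_paths ham (ltn_ord i) _ _ (splice_paths_bwd_span n)).
  + by rewrite ts_i G13.
  + by rewrite ts_i1 G03.
Qed.

End GridInGroup.

Section Commutators.
Variables (gT : finGroupType) (s t u : gT).
Hypotheses (cst : commute s t) (csu : commute s u) (ctu : commute t u).
Local Open Scope group_scope.
Local Notation S := (gen3 s t u).
Local Notation E := (dir_elt s t u).

Lemma commutator_span_of_basic :
  (forall n w, in_ham_span S (walk_flow w (map E (basic_square n)))) ->
  forall v a b, a \in S -> b \in S -> in_ham_span S (walk_flow v [:: a; b; a^-1; b^-1]).
Proof.
move=> basic v a b /gen3_dir [d1 lt_d1 ->] /gen3_dir [d2 lt_d2 ->] {a b}.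
have -> : [:: E d1; E d2; (E d1)^-1; (E d2)^-1] = map E (commutator_dirs d1 d2).
  by rewrite /= !dir_elt_inv.
have /andP [ok reduced] := commutator_dirs_reduce lt_d1 lt_d2.
pose b0 := v * (s ^+ 2 * t ^+ 2 * u ^+ 2)^-1.
have -> : v = cell_elt s t u b0 (2, 2, 2) by rewrite /cell_elt /b0 -!mulgA mulVg mulg1.
pose sq_chain := walk_chain (2, 2, 2) (commutator_dirs d1 d2).
apply: (@in_ham_span_eq _ _ (chain_flow s t u b0 sq_chain)) => [x a _|].
  by rewrite walk_flow_chain.
case/orP: reduced => [/(chain_flow_eqb s t u b0) null | /hasP [[e [c n]] _]].
  by apply: (in_ham_span_eq _ (in_ham_span0 _)) => x a _; rewrite null /chain_flow big_nil.
move/(chain_flow_eqb s t u b0) => sq.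
apply: (in_ham_span_eq _ (in_ham_spanZ e (basic n (cell_elt s t u b0 c)))) => x a _.
by rewrite sq chain_flow_scale walk_flow_chain // cell_walk_ok_square.
Qed.

End Commutators.

Unset Implicit Arguments.

Theorem proposition10p1 (gT : finGroupType) (s t u : gT) :
  abelian [set: gT] ->
  ~~ odd #|gT| ->
  <<gen3 s t u>>%g = [set: gT] ->
  (forall (i i' j j' : 'I_3) (k k' : 'I_2),
      (s ^+ i * t ^+ j * u ^+ k = s ^+ i' * t ^+ j' * u ^+ k')%g ->
      [/\ i = i', j = j' & k = k']) ->
  (Yset s t u = [set: gT] \/
   exists (v : gT) (ts : seq gT),
     ham_cycle_in (gen3 s t u) (~: Yset s t u) v ts /\
     walk_has_edge v ts (t ^+ 3)%g (t ^+ 3 * s)%g) ->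
  forall (v a b : gT), a \in gen3 s t u -> b \in gen3 s t u ->
    in_ham_span (gen3 s t u) (walk_flow v [:: a; b; a^-1; b^-1]%g).
Proof.
move=> abelG _ _ Yset_distinct Y_cases.
have comm (x y : gT) : commute x y by apply: (centsP abelG); rewrite inE.
have [cst csu ctu] : [/\ commute s t, commute s u & commute t u] by split; apply: comm.
apply: (commutator_span_of_basic cst csu ctu) => n w.
case: Y_cases => [Y_full | [v0 [ts [ham edge]]]].
- exact: (basic_square_span_grid cst csu ctu Yset_distinct Y_full n w).
- exact: (basic_square_span_spliced cst csu ctu Yset_distinct n w ham edge).
Qed.
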